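(* For $n\ge1$, the number of permutations $\pi\in Av_n(132)$ such that every permutation $\tilde r_\pi(\pi_i)$ ($1\le i\le n$) of size greater than one contains the pattern $231$ equals the coefficient of $x^n$ in $$\frac{1-2x-\sqrt{1-4x+8x^3}}{2x}.$$
   Context: $Av_n(\sigma)$ is the set of permutations of $\{1,\dots,n\}$ avoiding the pattern $\sigma$. For a permutation $\pi=\pi_1\cdots\pi_n$ and an entry $\pi_i$, $r_\pi(\pi_i)$ is the set of entries $\pi_k$ such that $\pi_k\le\pi_i$ and all entries of $\pi$ lying (in position) between $\pi_k$ and $\pi_i$ are $\le\pi_i$ (so $\pi_i\in r_\pi(\pi_i)$); $\tilde r_\pi(\pi_i)$ is the permutation obtained by taking the entries of $r_\pi(\pi_i)$ in their order of appearance in $\pi$ and standardizing them to $1,\dots,|r_\pi(\pi_i)|$. *)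

From mathcomp Require Import all_boot all_order all_algebra.
Set Implicit Arguments. Unset Strict Implicit. Unset Printing Implicit Defensive.
Import Order.TTheory GRing.Theory Num.Theory.

(* Permutations of {1..n} are represented as sequences of naturals
   (one-line notation); the set of them is [permutations (iota 1 n)]. *)

Definition contains (p sigma : seq nat) : bool :=
  [exists m : (size p).-tuple bool,
     let t := mask m p in
     (size t == size sigma) &&
     [forall i : 'I_(size sigma), forall j : 'I_(size sigma),
        (nth 0 t i < nth 0 t j) == (nth 0 sigma i < nth 0 sigma j)]].

Definition avoids (p sigma : seq nat) : bool := ~~ contains p sigma.

(* r_pi(pi_i) (i is a 0-based position): entries pi_k with pi_k <= pi_i and
   all entries strictly between positions k and i are <= pi_i, listed in
   their order of appearance in pi. *)
Definition r_seq (p : seq nat) (i : nat) : seq nat :=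
  [seq nth 0 p k | k <- iota 0 (size p) &
     (nth 0 p k <= nth 0 p i) &&
     all (fun j => nth 0 p j <= nth 0 p i)
         (iota (minn k i).+1 (maxn k i - minn k i).-1)].

(* standardization of a sequence of distinct numbers to 1..size *)
Definition std (s : seq nat) : seq nat :=
  [seq count (fun y => y <= x) s | x <- s].

Definition rt (p : seq nat) (i : nat) : seq nat := std (r_seq p i).

Definition good (p : seq nat) : bool :=
  all (fun i => (1 < size (rt p i)) ==> contains (rt p i) [:: 2; 3; 1])
      (iota 0 (size p)).

(* Formal power series over rat as coefficient sequences. *)
Local Open Scope ring_scope.

Definition radicand (m : nat) : rat :=
  (m == 0%N)%:R - 4 * (m == 1%N)%:R + 8 * (m == 3%N)%:R.

Definition is_sqrt_series (a s : nat -> rat) : Prop :=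
  s 0%N = 1 /\ forall m : nat, \sum_(k < m.+1) s k * s (m - k)%N = a m.

Definition numer (s : nat -> rat) (m : nat) : rat :=
  (m == 0%N)%:R - 2 * (m == 1%N)%:R - s m.

(* coefficient of x^n in (1 - 2x - s)/(2x) *)
Definition gf_coef (s : nat -> rat) (n : nat) : rat := numer s n.+1 / 2.

From mathcomp Require Import all_boot all_order all_algebra.
From mathcomp Require Import zify ring lra.
Import GRing.Theory.
Set Implicit Arguments. Unset Strict Implicit. Unset Printing Implicit Defensive.

(* Call a permutation admissible when it avoids 132 and every tilde r_pi(pi_i)
   of size > 1 contains 231.  Write an admissible pi of {c, ..., c+k} around
   its maximum, pi = a (c+k) b.  Avoiding 132 forces every entry of a to exceed
   every entry of b, so a and b are permutations of the intervals above and
   below c + j, where j = |b|.  Since c + k separates and dominates the two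
   blocks, r_pi of an entry of a (resp. b) is computed inside a (resp. b), and
   r_pi(c+k) = pi; standardization does not change 231-containment.  Hence pi
   is admissible iff a and b are, and pi (if of size > 1) contains 231; an
   admissible block of size >= 2 always contains 231 (look at its maximum),
   and a 231 also runs across two nonempty blocks.  This yields
       a_(k+1) = [k <> 1] * sum_(j <= k) a_j a_(k-j),
   i.e. A = 1 + x A^2 - 2x^2 for A = sum a_n x^n.  Then s = 1 - 2x A satisfies
   s^2 = 1 - 4x + 8x^3, and (1 - 2x - s)/(2x) = A - 1.  The file follows this
   plan: three-letter patterns and standardization, the decomposition around
   the maximum, the counting recurrence, and finally the power series. *)

Definition order_iso (t sigma : seq nat) : bool :=
  (size t == size sigma) &&
  [forall i : 'I_(size sigma), forall j : 'I_(size sigma),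
     (nth 0 t i < nth 0 t j) == (nth 0 sigma i < nth 0 sigma j)].

Lemma containsP s sigma :
  reflect (exists2 t, subseq t s & order_iso t sigma) (contains s sigma).
Proof.
apply: (iffP existsP) => [[m iso] | [t /subseqP [m size_m ->] iso]].
  by exists (mask m s); first exact: mask_subseq.
by exists (Tuple (introT eqP size_m)).
Qed.

Definition occ231 (s : seq nat) : Prop :=
  exists x y z, subseq [:: x; y; z] s /\ z < x < y.
Definition occ132 (s : seq nat) : Prop :=
  exists x y z, subseq [:: x; y; z] s /\ x < z < y.

Lemma order_isoP3 t u v w :
  reflect (exists x y z, t = [:: x; y; z] /\
    forall i j : 'I_3, (nth 0 [:: x; y; z] i < nth 0 [:: x; y; z] j) =
                       (nth 0 [:: u; v; w] i < nth 0 [:: u; v; w] j))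
  (order_iso t [:: u; v; w]).
Proof.
apply: (iffP andP) => [[/eqP size_t /forallP iso] | [x [y [z [-> iso]]]]].
  case: t size_t iso => [|x [|y [|z [|]]]] // _ iso.
  by exists x, y, z; split => // i j; have /eqP := forallP (iso i) j.
by split => //; apply/forallP => i; apply/forallP => j; rewrite iso.
Qed.

Lemma contains231 s : contains s [:: 2; 3; 1] <-> occ231 s.
Proof.
split => [/containsP [t sub /order_isoP3 [x [y [z [def_t iso]]]]] | [x [y [z [sub xyz]]]]].
  have := iso (inord 0) (inord 1); have := iso (inord 2) (inord 0).
  by rewrite !inordK // => zx xy; exists x, y, z; rewrite -def_t zx xy.
apply/containsP; exists [:: x; y; z] => //; apply/order_isoP3; exists x, y, z.
by split => // -[[|[|[|i]]] ?] // -[[|[|[|j]]] ?] //=; apply/idP/idP; lia.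
Qed.

Lemma contains132 s : contains s [:: 1; 3; 2] <-> occ132 s.
Proof.
split => [/containsP [t sub /order_isoP3 [x [y [z [def_t iso]]]]] | [x [y [z [sub xyz]]]]].
  have := iso (inord 0) (inord 2); have := iso (inord 2) (inord 1).
  by rewrite !inordK // => zy xz; exists x, y, z; rewrite -def_t zy xz.
apply/containsP; exists [:: x; y; z] => //; apply/order_isoP3; exists x, y, z.
by split => // -[[|[|[|i]]] ?] // -[[|[|[|j]]] ?] //=; apply/idP/idP; lia.
Qed.

Lemma avoids132 s : avoids s [:: 1; 3; 2] <-> ~ occ132 s.
Proof.
rewrite /avoids -(rwP negP); split => no132 occ; apply: no132; exact/contains132.
Qed.

Lemma mem_subseq3 (s : seq nat) x y z :
  subseq [:: x; y; z] s -> [/\ x \in s, y \in s & z \in s].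
Proof. by move=> /mem_subseq sub; split; apply: sub; rewrite !inE eqxx ?orbT. Qed.

(* Standardization replaces x by the number of entries <= x; it is strictly
   monotone on the entries, hence preserves (and reflects) 231-occurrences. *)
Lemma count_le_split (s : seq nat) x y : x <= y ->
  count (fun t => t <= y) s =
  count (fun t => t <= x) s + count (fun t => x < t <= y) s.
Proof. by move=> xy; elim: s => //= t s ->; case: (leqP t x); case: (leqP t y); lia. Qed.

Lemma std_ltE (s : seq nat) x y : x \in s -> y \in s ->
  (count (fun t => t <= x) s < count (fun t => t <= y) s) = (x < y).
Proof.
move=> xs ys; case: (ltnP x y) => [xy | yx]; last by rewrite (count_le_split s yx); lia.
rewrite (count_le_split s (ltnW xy)).
have : 0 < count (fun t => x < t <= y) s.
  by rewrite -has_count; apply/hasP; exists y; rewrite ?xy ?leqnn.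
lia.
Qed.

Lemma subseq3_map (f : nat -> nat) s x y z :
  subseq [:: x; y; z] (map f s) ->
  exists x' y' z', subseq [:: x'; y'; z'] s /\ [/\ x = f x', y = f y' & z = f z'].
Proof.
move=> /subseqP [m _]; rewrite -map_mask.
move: (mask_subseq m s); case: (mask m s) => [|x' [|y' [|z' [|]]]] //= sub [-> -> ->].
by exists x', y', z'.
Qed.

Lemma occ231_std s : occ231 (std s) <-> occ231 s.
Proof.
split=> [[x [y [z [/subseq3_map [x' [y' [z' [sub [-> -> ->]]]]] xyz]]]] |
         [x [y [z [sub xyz]]]]].
  have [xs ys zs] := mem_subseq3 sub.
  by exists x', y', z'; rewrite !std_ltE // in xyz.
have [xs ys zs] := mem_subseq3 sub.
exists (count (fun t => t <= x) s), (count (fun t => t <= y) s), (count (fun t => t <= z) s).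
by split; [exact: (map_subseq _ sub) | rewrite !std_ltE].
Qed.

Lemma subseq_catP (T : eqType) (s a b : seq T) : subseq s (a ++ b) ->
  exists s1 s2, [/\ s = s1 ++ s2, subseq s1 a & subseq s2 b].
Proof.
move=> /subseqP [m size_m ->].
rewrite -(cat_take_drop (size a) m) mask_cat; last first.
  by rewrite size_take size_m size_cat; case: ltnP => //; lia.
by exists (mask (take (size a) m) a), (mask (drop (size a) m) b); rewrite !mask_subseq.
Qed.

Lemma subseq_cons_neq (h m : nat) t b :
  h != m -> subseq (h :: t) (m :: b) = subseq (h :: t) b.
Proof. by move=> /negbTE /= ->. Qed.

Lemma subseq3_around x y z (a b : seq nat) m : x != m -> z != m ->
  subseq [:: x; y; z] (a ++ m :: b) ->
  [\/ subseq [:: x; y; z] a, subseq [:: x; y; z] b | x \in a /\ z \in b].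
Proof.
move=> xm zm /subseq_catP [s1 [s2 [def_s sub1 sub2]]].
case: s1 def_s sub1 => [|x1 [|y1 [|z1 [|? ?]]]] //= def_s sub1.
- by rewrite -def_s subseq_cons_neq // in sub2; constructor 2.
- case: def_s => ? def_s2; subst x1 s2; rewrite sub1seq in sub1.
  constructor 3; split => //; move: sub2 => /=.
  by case: eqP => _ /mem_subseq; apply; rewrite !inE eqxx ?orbT.
- case: def_s => ? ? def_s2; subst x1 y1 s2; constructor 3; split.
    by apply: (mem_subseq sub1); rewrite inE eqxx.
  by rewrite subseq_cons_neq // sub1seq in sub2.
- by case: def_s => ? ? ? ?; subst; constructor 1.
Qed.

Definition rsel (p : seq nat) (i k : nat) : bool :=
  (nth 0 p k <= nth 0 p i) &&
  all (fun j => nth 0 p j <= nth 0 p i) (iota (minn k i).+1 (maxn k i - minn k i).-1).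

Lemma r_seqE p i : r_seq p i = [seq nth 0 p k | k <- iota 0 (size p) & rsel p i k].
Proof. by []. Qed.

Lemma rsel_blocked p i k j : minn k i <= j <= maxn k i ->
  nth 0 p i < nth 0 p j -> ~~ rsel p i k.
Proof.
move=> j_between lt_ij; rewrite negb_and -ltnNge.
have [<- | jk] := eqVneq j k; first by rewrite lt_ij.
have ji : j != i by apply: contraTneq lt_ij => ->; rewrite ltnn.
apply/orP; right; apply/allPn; exists j; last by rewrite -ltnNge.
by rewrite mem_iota; lia.
Qed.

Lemma nth_bounded (p : seq nat) M j : all (fun x => x <= M) p -> nth 0 p j <= M.
Proof.
move=> /all_nthP le_M; case: (ltnP j (size p)) => [/le_M // | ?].
by rewrite nth_default.
Qed.

Lemma r_seq_at_max p i : all (fun x => x <= nth 0 p i) p -> r_seq p i = p.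
Proof.
move=> le_max; rewrite r_seqE (@eq_filter _ _ predT) ?filter_predT.
  by rewrite -/(mkseq _ _) mkseq_nth.
by move=> k; rewrite /rsel nth_bounded //=; apply/allP => j _; apply: nth_bounded.
Qed.

Lemma goodP p : good p <->
  forall i, i < size p -> 1 < size (r_seq p i) -> occ231 (r_seq p i).
Proof.
have size_rt i : size (rt p i) = size (r_seq p i) by rewrite size_map.
split=> [/allP good_p i ip | good_p].
  by move: (good_p i); rewrite mem_iota ip size_rt => /(_ isT) /implyP H /H /contains231 /occ231_std.
apply/allP => i; rewrite mem_iota size_rt => ip; apply/implyP => big.
by apply/contains231/occ231_std; apply: good_p.
Qed.

Lemma max_position (p : seq nat) :
  p != [::] -> exists2 i, i < size p & all (fun x => x <= nth 0 p i) p.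
Proof.
elim: p => // x p IH _; have [-> | p_nil] := eqVneq p [::].
  by exists 0 => //=; rewrite leqnn.
have [i ip le_i] := IH p_nil; case: (leqP x (nth 0 p i)) => [le_x | lt_x].
  by exists i.+1 => //=; rewrite le_x.
exists 0 => //=; rewrite leqnn /=; apply: sub_all le_i => y /=; lia.
Qed.

(* A good sequence of size >= 2 contains 231: take r_p at its maximum. *)
Lemma good_occ231 p : good p -> 1 < size p -> occ231 p.
Proof.
move=> /goodP good_p big.
have [i ip le_i] : exists2 i, i < size p & all (fun x => x <= nth 0 p i) p.
  by apply: max_position; case: (p) big.
by have := good_p i ip; rewrite r_seq_at_max //; apply.
Qed.

Section AroundMaximum.
Variables (a b : seq nat) (m : nat).
Hypotheses (lt_a : all (fun x => x < m) a) (lt_b : all (fun x => x < m) b).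

Lemma le_max x : x \in a ++ m :: b -> x <= m.
Proof.
rewrite mem_cat inE => /or3P [/(allP lt_a) | /eqP -> | /(allP lt_b)] //; exact: ltnW.
Qed.

Lemma subseq_around_l s : subseq s a -> subseq s (a ++ m :: b).
Proof. by move=> sub; apply: subseq_trans sub (prefix_subseq _ _). Qed.

Lemma subseq_around_r s : subseq s b -> subseq s (a ++ m :: b).
Proof.
move=> sub; apply: subseq_trans sub (subseq_trans (subseq_cons b m) _).
exact: suffix_subseq.
Qed.

Lemma subseq_across x y : x \in a -> y \in b -> subseq [:: x; m; y] (a ++ m :: b).
Proof.
move=> xa yb; rewrite -[[:: x; m; y]]/([:: x] ++ m :: [:: y]).
by apply: cat_subseq; rewrite ?sub1seq //= eqxx sub1seq.
Qed.

Lemma occ132_around : occ132 (a ++ m :: b) <->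
  [\/ occ132 a, occ132 b | exists x y, [/\ x \in a, y \in b & x < y]].
Proof.
split=> [[x [y [z [sub xzy]]]] | ].
  have [_ /le_max ym _] := mem_subseq3 sub.
  have xm : x != m by apply/eqP; lia.
  have zm : z != m by apply/eqP; lia.
  case: (subseq3_around xm zm sub).
  - by constructor 1; exists x, y, z.
  - by constructor 2; exists x, y, z.
  by move=> [xa zb]; constructor 3; exists x, z; split => //; lia.
case=> [[x [y [z [sub xzy]]]] | [x [y [z [sub xzy]]]] | [x [y [xa yb xy]]]].
- by exists x, y, z; split => //; apply: subseq_around_l.
- by exists x, y, z; split => //; apply: subseq_around_r.
exists x, m, y; split; first exact: subseq_across.
by rewrite xy (allP lt_b).
Qed.

Lemma nth_left k : k < size a -> nth 0 (a ++ m :: b) k = nth 0 a k.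
Proof. by move=> ka; rewrite nth_cat ka. Qed.

Lemma nth_max : nth 0 (a ++ m :: b) (size a) = m.
Proof. by rewrite nth_cat ltnn subnn. Qed.

Lemma nth_right k : nth 0 (a ++ m :: b) ((size a).+1 + k) = nth 0 b k.
Proof. by rewrite nth_cat ltnNge addSn ltnW ?ltnS ?leq_addr //= subSn ?leq_addr // addKn. Qed.

Lemma rsel_left i k : i < size a -> k < size a ->
  rsel (a ++ m :: b) i k = rsel a i k.
Proof.
move=> ia ka; rewrite /rsel !nth_left //; congr andb.
by apply: eq_in_all => j; rewrite mem_iota => j_between; rewrite nth_left //; lia.
Qed.

Lemma rsel_right i k :
  rsel (a ++ m :: b) ((size a).+1 + i) ((size a).+1 + k) = rsel b i k.
Proof.
rewrite /rsel !nth_right -addn_minr -addn_maxr subnDl -addnS iotaDl all_map.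
by congr andb; apply: eq_all => j /=; rewrite nth_right.
Qed.

(* The maximum m shields each block: r_p of an entry of a block is computed
   inside that block. *)
Lemma r_seq_left i : i < size a -> r_seq (a ++ m :: b) i = r_seq a i.
Proof.
move=> ia; rewrite !r_seqE size_cat /= iotaD filter_cat map_cat add0n.
have -> : [seq k <- iota (size a) (size b).+1 | rsel (a ++ m :: b) i k] = [::].
  apply/eqP; rewrite -[_ == _]negbK -has_filter; apply/hasPn => k.
  rewrite mem_iota => ka; apply: (@rsel_blocked _ _ _ (size a)); first lia.
  by rewrite nth_max nth_left // (allP lt_a) ?mem_nth.
rewrite cats0 (eq_in_filter (a2 := rsel a i)) => [|k]; last first.
  by rewrite mem_iota => ka; apply: rsel_left.
by apply/eq_in_map => k; rewrite mem_filter mem_iota => /andP [_ ka]; apply: nth_left.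
Qed.

Lemma r_seq_right i : i < size b ->
  r_seq (a ++ m :: b) ((size a).+1 + i) = r_seq b i.
Proof.
move=> ib; rewrite !r_seqE size_cat /= addnS -addSn iotaD filter_cat map_cat add0n.
have -> : [seq k <- iota 0 (size a).+1 | rsel (a ++ m :: b) ((size a).+1 + i) k] = [::].
  apply/eqP; rewrite -[_ == _]negbK -has_filter; apply/hasPn => k.
  rewrite mem_iota => ka; apply: (@rsel_blocked _ _ _ (size a)); first lia.
  by rewrite nth_max nth_right (allP lt_b) ?mem_nth.
rewrite -[(size a).+1]addn0 iotaDl addn0 filter_map -map_comp /=.
rewrite (eq_filter (a2 := rsel b i)) => [|k]; last exact: rsel_right.
by apply/eq_map => k /=; rewrite nth_right.
Qed.

Lemma good_around : good (a ++ m :: b) <->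
  [/\ good a, good b & (1 < size (a ++ m :: b) -> occ231 (a ++ m :: b))].
Proof.
have r_at_max : r_seq (a ++ m :: b) (size a) = a ++ m :: b.
  by apply: r_seq_at_max; rewrite nth_max; apply/allP => x /le_max.
have size_p : size (a ++ m :: b) = (size a + size b).+1 by rewrite size_cat addnS.
split=> [/goodP | [/goodP good_a /goodP good_b big]].
  rewrite size_p => good_p; split.
  - by apply/goodP => i ia; rewrite -r_seq_left //; apply: good_p; lia.
  - by apply/goodP => i ib; rewrite -r_seq_right //; apply: good_p; lia.
  - by move=> big; have := good_p (size a); rewrite r_at_max; apply => //; lia.
apply/goodP => i; rewrite size_p => ip.
case: (ltngtP i (size a)) => [ia | ai | ->].
- by rewrite r_seq_left //; apply: good_a.
- have -> : i = (size a).+1 + (i - (size a).+1) by lia.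
  by rewrite r_seq_right; [apply: good_b | ]; lia.
- by rewrite r_at_max.
Qed.

Hypothesis a_above_b : forall x y, x \in a -> y \in b -> y < x.

Lemma occ231_around : occ231 (a ++ m :: b) <->
  [\/ occ231 a, occ231 b | a != [::] /\ b != [::]].
Proof.
split=> [[x [y [z [sub zxy]]]] | ].
  have [_ /le_max ym _] := mem_subseq3 sub.
  have xm : x != m by apply/eqP; lia.
  have zm : z != m by apply/eqP; lia.
  case: (subseq3_around xm zm sub).
  - by constructor 1; exists x, y, z.
  - by constructor 2; exists x, y, z.
  by move=> [xa zb]; constructor 3; split; [case: (a) xa | case: (b) zb].
case=> [[x [y [z [sub zxy]]]] | [x [y [z [sub zxy]]]] | [a_nil b_nil]].
- by exists x, y, z; split => //; apply: subseq_around_l.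
- by exists x, y, z; split => //; apply: subseq_around_r.
have [x xa] : {x | x \in a} by case: (a) a_nil => [|x ?] // _; exists x; rewrite inE eqxx.
have [y yb] : {y | y \in b} by case: (b) b_nil => [|y ?] // _; exists y; rewrite inE eqxx.
exists x, m, y; split; first exact: subseq_across.
by rewrite a_above_b // (allP lt_a).
Qed.

End AroundMaximum.

Definition adm (p : seq nat) : bool := avoids p [:: 1; 3; 2] && good p.

(* Decomposition of admissibility around the maximum; 132-avoidance is what
   forces the block a to lie above the block b. *)
Lemma adm_around (a b : seq nat) m : uniq (a ++ m :: b) ->
  all (fun x => x < m) a -> all (fun x => x < m) b ->
  adm (a ++ m :: b) <->
  [/\ adm a, adm b, (forall x y, x \in a -> y \in b -> y < x) &
      (1 < size (a ++ m :: b) -> occ231 (a ++ m :: b))].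
Proof.
move=> uniq_p lt_a lt_b.
have neq_ab x y : x \in a -> y \in b -> x != y.
  move: uniq_p; rewrite cat_uniq => /and3P [_ /hasPn disj _] xa yb.
  by apply: contraTneq xa => ->; apply: disj; rewrite inE yb orbT.
rewrite /adm; split.
  move=> /andP [/avoids132 no132 /(good_around lt_a lt_b) [good_a good_b big]].
  have a_above_b x y : x \in a -> y \in b -> y < x.
    move=> xa yb; have := neq_ab _ _ xa yb; case: (ltngtP x y) => //= xy _.
    by case: no132; apply/(occ132_around lt_a lt_b); constructor 3; exists x, y; split.
  split=> //; rewrite ?good_a ?good_b andbT; apply/avoids132 => occ; apply: no132.
  - by apply/(occ132_around lt_a lt_b); constructor 1.
  - by apply/(occ132_around lt_a lt_b); constructor 2.
move=> [/andP [/avoids132 no132_a good_a] /andP [/avoids132 no132_b good_b] a_above_b big].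
apply/andP; split; last exact/(good_around lt_a lt_b).
apply/avoids132 => /(occ132_around lt_a lt_b) [//|//|[x [y [xa yb xy]]]].
by have := a_above_b _ _ xa yb; lia.
Qed.

Lemma adm_nil : adm [::].
Proof. by apply/andP; split => //; apply/avoids132 => -[x [y [z []]]]. Qed.

Lemma adm_occ231 s : adm s -> occ231 s <-> 1 < size s.
Proof.
move=> /andP [_ good_s]; split => [[x [y [z [/size_subseq /= sub _]]]] | ]; first lia.
exact: good_occ231.
Qed.

Definition adm_perms (s : seq nat) : seq (seq nat) := filter adm (permutations s).

Lemma mem_adm_perms t s : (t \in adm_perms s) = adm t && perm_eq t s.
Proof. by rewrite mem_filter mem_permutations. Qed.

Lemma perm_iota_of_subset (s : seq nat) c n :
  uniq s -> {subset s <= iota c n} -> size s = n -> perm_eq s (iota c n).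
Proof.
move=> uniq_s sub size_s; apply: uniq_perm => //; first exact: iota_uniq.
by apply: (uniq_min_size uniq_s sub _).2; rewrite size_iota size_s.
Qed.

Lemma blocks_iota c (a b : seq nat) :
  perm_eq (a ++ b) (iota c (size a + size b)) ->
  (forall x y, x \in a -> y \in b -> y < x) ->
  perm_eq b (iota c (size b)) /\ perm_eq a (iota (c + size b) (size a)).
Proof.
move=> perm_ab a_above_b.
have mem_ab x : x \in a ++ b -> c <= x < c + (size a + size b).
  by rewrite (perm_mem perm_ab) mem_iota.
have := iota_uniq c (size a + size b).
rewrite -(perm_uniq perm_ab) cat_uniq => /and3P [uniq_a /hasPn disj uniq_b].
have perm_b : perm_eq b (iota c (size b)).
  apply: perm_iota_of_subset => // y yb.
  have := mem_ab y; rewrite mem_cat yb orbT mem_iota => /(_ isT) /andP [-> y_lt] /=.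
  have : size a <= size (iota y.+1 (c + (size a + size b) - y.+1)).
    apply: uniq_leq_size uniq_a _ => x xa; rewrite mem_iota.
    by have := a_above_b _ _ xa yb; have := mem_ab x; rewrite mem_cat xa => /(_ isT); lia.
  by rewrite size_iota; lia.
split=> //; apply: perm_iota_of_subset => // x xa; rewrite mem_iota.
have := disj x; rewrite (perm_mem perm_b) mem_iota => /contraL /(_ xa).
by have := mem_ab x; rewrite mem_cat xa => /(_ isT); lia.
Qed.

Lemma perm_iota_max c k (a b : seq nat) :
  perm_eq (a ++ (c + k) :: b) (iota c k.+1) <-> perm_eq (a ++ b) (iota c k).
Proof.
have perm_max : perm_eq (iota c k.+1) ((c + k) :: iota c k).
  by rewrite -addn1 iotaD /= perm_catC.
have move_max : perm_eq (a ++ (c + k) :: b) ((c + k) :: a ++ b).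
  exact: permEl (perm_catCA a [:: c + k] b).
by rewrite (permPr perm_max) (permPl move_max) perm_cons.
Qed.

Lemma adm_decomp c k t : perm_eq t (iota c k.+1) -> adm t ->
  exists j a b, [/\ j <= k, t = a ++ (c + k) :: b,
     a \in adm_perms (iota (c + j) (k - j)) & b \in adm_perms (iota c j)].
Proof.
move=> perm_t adm_t.
have uniq_t : uniq t by rewrite (perm_uniq perm_t) iota_uniq.
have le_t x : x \in t -> x <= c + k by rewrite (perm_mem perm_t) mem_iota; lia.
have max_t : c + k \in t by rewrite (perm_mem perm_t) mem_iota; lia.
move: perm_t adm_t uniq_t le_t; case/splitPr: max_t => a b perm_t adm_t uniq_t le_t.
move: (uniq_t); rewrite cat_uniq /= => /and3P [_ /norP [max_a _] /andP [max_b _]].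
have below_max s : c + k \notin s -> {subset s <= a ++ (c + k) :: b} ->
    all (fun x => x < c + k) s.
  move=> max_s sub_s; apply/allP => x xs; rewrite ltn_neqAle le_t ?sub_s // andbT.
  by apply: contraNneq max_s => <-.
have lt_a : all (fun x => x < c + k) a.
  by apply: below_max max_a _ => x xa; rewrite mem_cat xa.
have lt_b : all (fun x => x < c + k) b.
  by apply: below_max max_b _ => x xb; rewrite mem_cat inE xb !orbT.
have [adm_a adm_b a_above_b _] := (adm_around uniq_t lt_a lt_b).1 adm_t.
have size_ab : size a + size b = k.
  by rewrite -size_cat -(size_iota c k); apply/perm_size/perm_iota_max.
have perm_ab : perm_eq (a ++ b) (iota c (size a + size b)).
  by rewrite size_ab; apply/perm_iota_max.
have [perm_b perm_a] := blocks_iota perm_ab a_above_b.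
have size_a : k - size b = size a by rewrite -size_ab addnK.
exists (size b), a, b; rewrite size_a !mem_adm_perms adm_a adm_b perm_a perm_b.
by split => //; rewrite -size_ab leq_addl.
Qed.

Lemma glue_perm c k j (a b : seq nat) : j <= k ->
  perm_eq a (iota (c + j) (k - j)) -> perm_eq b (iota c j) ->
  perm_eq (a ++ (c + k) :: b) (iota c k.+1).
Proof.
move=> jk perm_a perm_b; apply/perm_iota_max.
by rewrite -{1}(subnKC jk) iotaD perm_catC perm_cat.
Qed.

Lemma adm_perms_iota_mem s c n x :
  s \in adm_perms (iota c n) -> (x \in s) = (c <= x < c + n).
Proof. by rewrite mem_adm_perms => /andP [_ /perm_mem ->]; rewrite mem_iota. Qed.

Lemma adm_perms_iota_size s c n : s \in adm_perms (iota c n) -> size s = n.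
Proof. by rewrite mem_adm_perms => /andP [_ /perm_size ->]; rewrite size_iota. Qed.

Section Glue.
Variables (c k j : nat) (a b : seq nat).
Hypotheses (jk : j <= k) (mem_a : a \in adm_perms (iota (c + j) (k - j)))
           (mem_b : b \in adm_perms (iota c j)).

Let adm_a : adm a. Proof. by move: mem_a; rewrite mem_adm_perms => /andP []. Qed.
Let adm_b : adm b. Proof. by move: mem_b; rewrite mem_adm_perms => /andP []. Qed.
Let size_a : size a = k - j. Proof. exact: adm_perms_iota_size mem_a. Qed.
Let size_b : size b = j. Proof. exact: adm_perms_iota_size mem_b. Qed.

Let lt_a : all (fun x => x < c + k) a.
Proof. by apply/allP => x; rewrite (adm_perms_iota_mem _ mem_a); lia. Qed.
Let lt_b : all (fun x => x < c + k) b.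
Proof. by apply/allP => x; rewrite (adm_perms_iota_mem _ mem_b); lia. Qed.
Let a_above_b x y : x \in a -> y \in b -> y < x.
Proof. by rewrite (adm_perms_iota_mem _ mem_a) (adm_perms_iota_mem _ mem_b); lia. Qed.

Lemma glued_perm : perm_eq (a ++ (c + k) :: b) (iota c k.+1).
Proof.
by apply: glue_perm jk _ _; [move: mem_a | move: mem_b]; rewrite mem_adm_perms => /andP [].
Qed.

(* The glued permutation is admissible exactly when k <> 1: the two blocks are
   admissible, and for k >= 2 a 231 occurs inside a block of size >= 2 or
   across two nonempty blocks, while for k = 1 the glued permutation has size 2. *)
Lemma adm_glued_iff : adm (a ++ (c + k) :: b) = (k != 1).
Proof.
have uniq_p : uniq (a ++ (c + k) :: b) by rewrite (perm_uniq glued_perm) iota_uniq.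
have size_p : size (a ++ (c + k) :: b) = k.+1 by rewrite size_cat /= size_a size_b; lia.
have occ_a := adm_occ231 adm_a; have occ_b := adm_occ231 adm_b.
rewrite size_a in occ_a; rewrite size_b in occ_b.
have occ_p := occ231_around lt_a lt_b a_above_b.
apply/idP/idP => [/(adm_around uniq_p lt_a lt_b) [_ _ _ big_occ] | k1].
  apply/eqP => k1; have /occ_p : occ231 (a ++ (c + k) :: b) by apply: big_occ; lia.
  case=> [/occ_a | /occ_b | [a_nil b_nil]]; [lia | lia |].
  by move: a_nil b_nil; rewrite -!size_eq0 size_a size_b; lia.
apply/(adm_around uniq_p lt_a lt_b); split=> //; rewrite size_p => big.
apply/occ_p; case: (posnP j) => [j0 | j_pos]; first by constructor 1; apply/occ_a; lia.
case: (ltnP j k) => [j_lt_k | k_le_j]; last by constructor 2; apply/occ_b; lia.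
by constructor 3; rewrite -!size_eq0 size_a size_b; split; lia.
Qed.

End Glue.

Definition num_adm (c n : nat) : nat := count adm (permutations (iota c n)).

Definition splits (c k j : nat) : seq (seq nat * seq nat) :=
  [seq (a, b) | a <- adm_perms (iota (c + j) (k - j)), b <- adm_perms (iota c j)].

Definition glued (c k : nat) : seq (seq nat) :=
  [seq ab.1 ++ (c + k) :: ab.2 | j <- iota 0 k.+1, ab <- splits c k j].

Lemma mem_splits c k j ab : (ab \in splits c k j) =
  (ab.1 \in adm_perms (iota (c + j) (k - j))) && (ab.2 \in adm_perms (iota c j)).
Proof.
apply/allpairsP/andP => [[[a b] [/= ? ? ->]] // | [a_adm b_adm]].
by exists ab; case: ab a_adm b_adm.
Qed.

Lemma cat_max_inj m (a a' b b' : seq nat) : m \notin a -> m \notin a' ->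
  a ++ m :: b = a' ++ m :: b' -> a = a' /\ b = b'.
Proof.
move=> max_a max_a' eq_p.
have size_a : size a = size a'.
  by have := congr1 (index m) eq_p; rewrite !index_cat (negbTE max_a) (negbTE max_a') /= eqxx !addn0.
have := congr1 (take (size a)) eq_p; rewrite take_size_cat // take_size_cat // => ->.
have := congr1 (drop (size a).+1) eq_p; rewrite -!cat_rcons drop_size_cat ?size_rcons //.
by rewrite drop_size_cat // size_rcons size_a.
Qed.

Lemma glued_uniq c k : uniq (glued c k).
Proof.
apply: allpairs_uniq_dep => [|j _|]; first exact: iota_uniq.
  by apply: allpairs_uniq => [||[? ?] [? ?]] //; apply/filter_uniq/permutations_uniq.
move=> u v /allpairsPdep [j1 [[a1 b1] [_ ab1 def_u]]] /allpairsPdep [j2 [[a2 b2] [_ ab2 def_v]]].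
subst u v => /=.
rewrite !mem_splits /= in ab1 ab2.
case/andP: ab1 => a1_adm b1_adm; case/andP: ab2 => a2_adm b2_adm.
have max_notin j a : a \in adm_perms (iota (c + j) (k - j)) -> c + k \notin a.
  by move=> a_adm; rewrite (adm_perms_iota_mem _ a_adm); lia.
move=> /(cat_max_inj (max_notin _ _ a1_adm) (max_notin _ _ a2_adm)) [-> eq_b].
have j12 : j1 = j2 by rewrite -(adm_perms_iota_size b1_adm) eq_b (adm_perms_iota_size b2_adm).
by move: b1_adm eq_b; rewrite j12 => _ ->.
Qed.

Lemma mem_glued c k t :
  (t \in filter adm (glued c k)) = (t \in adm_perms (iota c k.+1)).
Proof.
rewrite mem_filter mem_adm_perms; case adm_t: (adm t) => //=.
apply/allpairsPdep/idP => [[j [[a b] [jk ab ->]]] | perm_t].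
  rewrite mem_splits /= in ab; case/andP: ab => a_adm b_adm.
  by apply: glued_perm a_adm b_adm; rewrite mem_iota in jk; lia.
have [j [a [b [jk -> a_adm b_adm]]]] := adm_decomp perm_t adm_t.
by exists j, (a, b); rewrite mem_iota mem_splits a_adm b_adm; split => //; lia.
Qed.

Definition glue_adm (c k : nat) (ab : seq nat * seq nat) : bool :=
  adm (ab.1 ++ (c + k) :: ab.2).

Lemma num_adm_glued c k :
  num_adm c k.+1 = \sum_(j < k.+1) count (glue_adm c k) (splits c k j).
Proof.
rewrite /num_adm -size_filter -/(adm_perms _).
have -> : size (adm_perms (iota c k.+1)) = size (filter adm (glued c k)).
  apply/perm_size/uniq_perm => [||t]; last by rewrite mem_glued.
    exact/filter_uniq/permutations_uniq.
  exact/filter_uniq/glued_uniq.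
rewrite size_filter /glued count_flatten -map_comp sumnE big_map -/(index_iota 0 k.+1) big_mkord.
by apply: eq_bigr => j _; rewrite /= count_map.
Qed.

(* By adm_glued_iff, all or none of the pairs of size j glue admissibly. *)
Lemma count_splits c k j : j <= k ->
  count (glue_adm c k) (splits c k j) = (k != 1) * (num_adm (c + j) (k - j) * num_adm c j).
Proof.
move=> jk; rewrite (@eq_in_count _ _ (fun _ => k != 1)) => [|[a b]]; last first.
  by rewrite mem_splits => /andP [/= a_adm b_adm]; exact: adm_glued_iff jk a_adm b_adm.
case: (k != 1); rewrite ?count_pred0 // count_predT mul1n size_allpairs.
by rewrite /num_adm -!size_filter.
Qed.

Lemma num_adm0 c : num_adm c 0 = 1.
Proof. by rewrite /num_adm /= adm_nil. Qed.

Lemma num_adm_rec c k : num_adm c k.+1 =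
  (k != 1) * \sum_(j < k.+1) num_adm (c + j) (k - j) * num_adm c j.
Proof.
rewrite num_adm_glued big_distrr; apply: eq_bigr => j _.
by apply: count_splits; rewrite -ltnS.
Qed.

(* The count does not depend on the offset (the recurrence does not). *)
Lemma num_adm_shift c n : num_adm c n = num_adm 0 n.
Proof.
elim/ltn_ind: n c => -[|k] IH c; first by rewrite !num_adm0.
rewrite !num_adm_rec; congr (_ * _); apply: eq_bigr => j _.
have lt_kj : k - j < k.+1 by lia.
by rewrite add0n (IH j (ltn_ord j)) (IH _ lt_kj (c + j)) (IH _ lt_kj j).
Qed.

Definition adm_num (n : nat) : nat := num_adm 0 n.

Definition adm_conv (n : nat) : nat := \sum_(j < n.+1) adm_num j * adm_num (n - j).

Lemma adm_num_rec k : adm_num k.+1 = (k != 1) * adm_conv k.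
Proof.
rewrite /adm_num num_adm_rec; congr (_ * _); apply: eq_bigr => j _.
by rewrite mulnC add0n (num_adm_shift j).
Qed.

Lemma adm_num0 : adm_num 0 = 1. Proof. exact: num_adm0. Qed.

Lemma adm_conv1 : adm_conv 1 = 2.
Proof.
have adm_num1 : adm_num 1 = 1 by rewrite adm_num_rec /adm_conv big_ord1 adm_num0.
by rewrite /adm_conv !big_ord_recl big_ord0 /= adm_num0 adm_num1.
Qed.

Local Open Scope ring_scope.

Lemma conv_split (R : pzRingType) (f : nat -> R) q :
  \sum_(k < q.+2) f k * f (q.+1 - k)%N =
  f 0%N * f q.+1 + \sum_(i < q) f i.+1 * f (q - i)%N + f q.+1 * f 0%N.
Proof.
rewrite big_ord_recl big_ord_recr /= subn0 subnn addrA.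
by congr (_ + _ + _); apply: eq_bigr => i _; rewrite subSS.
Qed.

Lemma sqrt_series_unique (R : realFieldType) (s t : nat -> R) :
  s 0%N = 1 -> t 0%N = 1 ->
  (forall m, \sum_(k < m.+1) s k * s (m - k)%N = \sum_(k < m.+1) t k * t (m - k)%N) ->
  forall m, s m = t m.
Proof.
move=> s0 t0 same_sq m; elim/ltn_ind: m => -[|q] IH; first by rewrite s0 t0.
have := same_sq q.+1; rewrite !conv_split s0 t0.
have -> : \sum_(i < q) s i.+1 * s (q - i)%N = \sum_(i < q) t i.+1 * t (q - i)%N.
  by apply: eq_bigr => i _; have lt_iq := ltn_ord i; rewrite !IH //; lia.
lra.
Qed.

(* The coefficients of s = 1 - 2x A(x). *)
Definition sqrt_coef (m : nat) : rat := if m is m'.+1 then - 2 * (adm_num m')%:R else 1.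

Lemma sqrt_coef0 : sqrt_coef 0 = 1. Proof. by []. Qed.
Lemma sqrt_coefS m : sqrt_coef m.+1 = - 2 * (adm_num m)%:R. Proof. by []. Qed.

(* s^2 = 1 - 4x + 8x^3, coefficientwise: for m >= 2 the coefficient of x^m is
   -4 a_(m-1) + 4 conv_(m-2), which vanishes except at m = 3, where a_2 = 0. *)
Lemma sqrt_coef_sq m :
  \sum_(k < m.+1) sqrt_coef k * sqrt_coef (m - k)%N = radicand m.
Proof.
case: m => [|[|n]].
- by rewrite big_ord1 subnn sqrt_coef0 /radicand /=; lra.
- by rewrite conv_split big_ord0 sqrt_coef0 sqrt_coefS adm_num0 /radicand /=; lra.
have middle : \sum_(i < n.+1) sqrt_coef i.+1 * sqrt_coef (n.+1 - i)%N = 4 * (adm_conv n)%:R.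
  rewrite natr_sum mulr_sumr; apply: eq_bigr => i _.
  by rewrite (subSn (ltn_ord i : (i <= n)%N)) !sqrt_coefS natrM; ring.
rewrite conv_split middle sqrt_coef0 sqrt_coefS adm_num_rec natrM /radicand.
have [-> | n1] := eqVneq n 1; first by rewrite adm_conv1 /=; lra.
have -> : (n.+2 == 3)%N = false by apply: contraNF n1; rewrite !eqSS.
by rewrite /=; lra.
Qed.

Theorem corollary6 :
  (exists s : nat -> rat, is_sqrt_series radicand s) /\
  forall (n : nat) (s : nat -> rat), (1 <= n)%N ->
    is_sqrt_series radicand s ->
    ((count (fun p => avoids p [:: 1; 3; 2] && good p)
            (permutations (iota 1 n)))%:R : rat) = gf_coef s n.
Proof.
split; first by exists sqrt_coef; split; [exact: sqrt_coef0 | exact: sqrt_coef_sq].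
move=> [//|n] s _ [s0 s_sq].
have s_eq m : s m = sqrt_coef m.
  by apply: sqrt_series_unique s0 sqrt_coef0 _ m => k; rewrite s_sq sqrt_coef_sq.
rewrite /gf_coef /numer s_eq sqrt_coefS.
have -> : count (fun p => avoids p [:: 1; 3; 2] && good p) (permutations (iota 1 n.+1)) =
          adm_num n.+1 by exact: num_adm_shift.
rewrite /=; lra.
Qed.
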